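(* Let $\mathbf{CRng}$ be the category of commutative (unital) rings and unital ring homomorphisms, and let $\mathcal{C}$ be the category whose objects are commutative rings and whose morphisms $S\to R$ are subunital maps $f\colon R\to S$ (maps preserving $0$, $+$ and multiplication but not necessarily $1$), with the evident (reversed) composition; equivalently $\mathcal{C}$ is the Kleisli category of the lift monad $(-)+1$ on $\mathbf{CRng}^{\mathrm{op}}$. For a commutative ring $R$ let $\mathrm{Pred}(R)$ be the set of idempotents $e=e^2$ of $R$, ordered by $e\le d$ iff $ed=e$. Define $\square\colon\mathcal{C}\to\mathbf{PoSets}^{\mathrm{op}}$ by $\square(R)=\mathrm{Pred}(R)$ and, for a subunital map $f\colon R\to S$ (a morphism $S\to R$ of $\mathcal{C}$), $\square(f)(e)=f(e)+(1-f(1))$. Then the forgetful functor $U\colon\int\square\to\mathcal{C}$ has a left adjoint $0$ with $0(R)=(R,0)$ and a right adjoint $1$ with $1(R)=(R,1)$; moreover there is a functor (comprehension) $\int\square\to\mathcal{C}$ with $(R,e)\mapsto eR$ which is right adjoint to $1$, and a functor (quotient) with $(R,e)\mapsto(1-e)R$ which is left adjoint to $0$, where $eR$ and $(1-e)R$ are commutative rings with units $e$ and $1-e$ respectively.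
   Context: For a functor $F\colon\mathcal{B}\to\mathbf{PoSets}^{\mathrm{op}}$, $\int F$ is the category with objects $(X,P)$, $P\in F(X)$, and morphisms $f\colon(X,P)\to(Y,Q)$ the morphisms $f\colon X\to Y$ of $\mathcal{B}$ with $P\le F(f)(Q)$; the forgetful functor sends $(X,P)\mapsto X$, $f\mapsto f$; $0$ and $1$ act as identity on morphisms. *)

From HB Require Import structures.
From mathcomp Require Import all_boot all_order all_algebra ring.
Set Implicit Arguments. Unset Strict Implicit. Unset Printing Implicit Defensive.
Import GRing.Theory.
Local Open Scope ring_scope.

Record Category := {
  Ob : Type;
  Hom : Ob -> Ob -> Type;
  idm : forall A, Hom A A;
  comp : forall A B C, Hom B C -> Hom A B -> Hom A C
}.
Arguments idm {c} A.
Arguments comp {c A B C} g f.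

Record Functor (C D : Category) := {
  fobj : Ob C -> Ob D;
  fmap : forall A B, Hom A B -> Hom (fobj A) (fobj B)
}.
Arguments fobj {C D} f _.
Arguments fmap {C D} f {A B} _.

Definition IsFunctor C D (F : Functor C D) : Prop :=
  (forall A, fmap F (idm A) = idm (fobj F A)) /\
  (forall A B E (g : Hom B E) (f : Hom A B),
      fmap F (comp g f) = comp (fmap F g) (fmap F f)).

Definition Adjunction C D (L : Functor D C) (R : Functor C D) : Prop :=
  exists phi : forall d c, Hom (fobj L d) c -> Hom d (fobj R c),
    (forall d c, bijective (phi d c)) /\
    (forall d' d c c' (h : Hom d' d) (f : Hom (fobj L d) c) (g : Hom c c'),
        phi d' c' (comp g (comp f (fmap L h))) =
        comp (fmap R g) (comp (phi d c f) h)).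

(* Grothendieck construction  int F  for  F : B -> PoSets^op.           *)
(* F X is a poset (carrier [P X], order [le]), F f : F Y -> F X.        *)
Record IdxPoset (B : Category) := {
  P : Ob B -> Type;
  le : forall X, P X -> P X -> Prop;
  act : forall X Y, Hom X Y -> P Y -> P X;
  le_refl : forall X (p : P X), le p p;
  le_trans : forall X (p q r : P X), le p q -> le q r -> le p r;
  act_mono : forall X Y (f : Hom X Y) p q, le p q -> le (act f p) (act f q);
  act_id : forall X (p : P X), act (idm X) p = p;
  act_comp : forall X Y Z (g : Hom Y Z) (f : Hom X Y) (r : P Z),
      act (comp g f) r = act f (act g r)
}.
Arguments le {B} i {X} _ _.
Arguments act {B} i {X Y} _ _.

Section Groth.
Variables (B : Category) (F : IdxPoset B).
Definition GObj := {X : Ob B & P F X}.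
Definition GHom (x y : GObj) :=
  {f : Hom (projT1 x) (projT1 y) | le F (projT2 x) (act F f (projT2 y))}.
Lemma Gid_proof (x : GObj) : le F (projT2 x) (act F (idm (projT1 x)) (projT2 x)).
Proof. by rewrite act_id; apply: le_refl. Qed.
Definition Gid (x : GObj) : GHom x x := exist _ (idm (projT1 x)) (Gid_proof x).
Lemma Gcomp_proof (x y z : GObj) (g : GHom y z) (f : GHom x y) :
  le F (projT2 x) (act F (comp (proj1_sig g) (proj1_sig f)) (projT2 z)).
Proof.
rewrite act_comp; apply: le_trans (proj2_sig f) _.
exact: act_mono (proj2_sig g).
Qed.
Definition Gcomp (x y z : GObj) (g : GHom y z) (f : GHom x y) : GHom x z :=
  exist _ (comp (proj1_sig g) (proj1_sig f)) (Gcomp_proof g f).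
Definition Groth : Category := {| Ob := GObj; Hom := GHom; idm := Gid; comp := Gcomp |}.
Definition Forget : Functor Groth B :=
  @Build_Functor Groth B (fun x : GObj => projT1 x)
     (fun (x y : GObj) (f : GHom x y) => proj1_sig f).
End Groth.

(* The category C: commutative (possibly zero) rings, morphisms S -> R *)
(* are subunital maps R -> S.                                           *)
Definition subunital (R S : comPzRingType) (f : R -> S) : Prop :=
  [/\ f 0 = 0, (forall x y, f (x + y) = f x + f y) &
      (forall x y, f (x * y) = f x * f y)].

Definition CHom (S R : comPzRingType) := {f : R -> S | subunital f}.

Lemma subunital_id (R : comPzRingType) : subunital (@id R).
Proof. by []. Qed.
Lemma subunital_comp (A B E : comPzRingType) (f : B -> A) (g : E -> B) :
  subunital f -> subunital g -> subunital (f \o g).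
Proof.
case=> f0 fD fM [g0 gD gM]; split=> /=; first by rewrite g0 f0.
  by move=> x y; rewrite gD fD.
by move=> x y; rewrite gM fM.
Qed.

Definition Cid (R : comPzRingType) : CHom R R := exist _ id (subunital_id R).
(* g : E -> B (in C: B -> E, a map E -> B), f : A -> B in C (map B -> A) *)
Definition Ccomp (A B E : comPzRingType) (g : CHom B E) (f : CHom A B) : CHom A E :=
  exist _ (proj1_sig f \o proj1_sig g) (subunital_comp (proj2_sig f) (proj2_sig g)).

Definition CC : Category :=
  {| Ob := comPzRingType; Hom := CHom; idm := Cid; comp := Ccomp |}.

Definition Pred (R : comPzRingType) := {e : R | e * e == e}.
Definition pred_le (R : comPzRingType) (e d : Pred R) : Prop :=
  proj1_sig e * proj1_sig d = proj1_sig e.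

Section SubunitalFacts.
Variables (R S : comPzRingType) (f : R -> S) (hf : subunital f).
Lemma sub_f0 : f 0 = 0. Proof. by case: hf. Qed.
Lemma sub_fD x y : f (x + y) = f x + f y. Proof. by case: hf. Qed.
Lemma sub_fM x y : f (x * y) = f x * f y. Proof. by case: hf. Qed.
Lemma sub_fN x : f (- x) = - f x.
Proof. by apply/eqP; rewrite -subr_eq0 opprK -sub_fD addNr sub_f0. Qed.
Lemma sub_fB x y : f (x - y) = f x - f y. Proof. by rewrite sub_fD sub_fN. Qed.
Lemma sub_f1 : f 1 * f 1 = f 1. Proof. by rewrite -sub_fM mulr1. Qed.
Lemma sub_f1r x : f x * f 1 = f x. Proof. by rewrite -sub_fM mulr1. Qed.
End SubunitalFacts.

Definition sq_val (R S : comPzRingType) (f : R -> S) (e : R) : S := f e + (1 - f 1).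

Lemma sq_idem (S R : comPzRingType) (f : CHom S R) (e : Pred R) :
  sq_val (proj1_sig f) (proj1_sig e) * sq_val (proj1_sig f) (proj1_sig e)
  == sq_val (proj1_sig f) (proj1_sig e).
Proof.
case: f e => f hf [e /eqP he] /=; rewrite /sq_val; apply/eqP.
have ha : f e * f e = f e by rewrite -sub_fM // he.
have hu := sub_f1 hf; have hau := sub_f1r hf e.
set a := f e in ha hau *; set u := f 1 in hu hau *.
transitivity (a * a + 2%:R * (a - a * u) + (1 - 2%:R * u + u * u)); first ring.
rewrite ha hau hu; ring.
Qed.

Definition square_act (S R : comPzRingType) (f : CHom S R) (e : Pred R) : Pred S :=
  exist _ (sq_val (proj1_sig f) (proj1_sig e)) (sq_idem f e).

Lemma square_le_refl (R : comPzRingType) (e : Pred R) : pred_le e e.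
Proof. by case: e => e he; rewrite /pred_le /=; apply/eqP. Qed.
Lemma square_le_trans (R : comPzRingType) (a b c : Pred R) :
  pred_le a b -> pred_le b c -> pred_le a c.
Proof.
case: a b c => a ? [b ?] [c ?]; rewrite /pred_le /= => hab hbc.
by rewrite -hab -mulrA hbc.
Qed.
Lemma square_mono (S R : comPzRingType) (f : CHom S R) (a b : Pred R) :
  pred_le a b -> pred_le (square_act f a) (square_act f b).
Proof.
case: f a b => f hf [a ha] [b hb]; rewrite /pred_le /= /sq_val => hab.
have hu := sub_f1 hf; have hau := sub_f1r hf a; have hbu := sub_f1r hf b.
have hab' : f a * f b = f a by rewrite -sub_fM // hab.
move: hab' hu hau hbu; set x := f a; set y := f b; set u := f 1 => h1 h2 h3 h4.
transitivity (x * y + (x - x * u) + (y - y * u) + (1 - 2%:R * u + u * u)); first ring.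
rewrite h1 h2 h3 h4; ring.
Qed.
Lemma square_id (R : comPzRingType) (e : Pred R) : square_act (Cid R) e = e.
Proof. by apply: val_inj => /=; rewrite /sq_val subrr addr0. Qed.
Lemma square_comp (A B E : comPzRingType) (g : CHom B E) (f : CHom A B) (r : Pred E) :
  square_act (Ccomp g f) r = square_act f (square_act g r).
Proof.
apply: val_inj; case: f g r => f hf [g hg] [r hr] /=; rewrite /sq_val /=.
by rewrite (sub_fD hf) (sub_fB hf); ring.
Qed.

Definition square : IdxPoset CC :=
  @Build_IdxPoset CC Pred (@pred_le) (@square_act)
    square_le_refl square_le_trans square_mono square_id square_comp.

Definition IntSq : Category := Groth square.
Definition U : Functor IntSq CC := Forget square.

Definition pred0 (R : comPzRingType) : Pred R := exist _ 0 (introT eqP (mulr0 0)).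
Definition pred1 (R : comPzRingType) : Pred R := exist _ 1 (introT eqP (mulr1 1)).

Lemma zero_hom_proof (R S : comPzRingType) (f : CHom R S) :
  pred_le (pred0 R) (square_act f (pred0 S)).
Proof. by rewrite /pred_le /= mul0r. Qed.
Lemma one_hom_proof (R S : comPzRingType) (f : CHom R S) :
  pred_le (pred1 R) (square_act f (pred1 S)).
Proof. by rewrite /pred_le /= /sq_val mul1r addrC subrK. Qed.

Definition ZeroF : Functor CC IntSq :=
  @Build_Functor CC IntSq (fun R : comPzRingType => existT _ R (pred0 R) : GObj square)
    (fun (R S : comPzRingType) (f : CHom R S) => exist _ f (zero_hom_proof f)).
Definition OneF : Functor CC IntSq :=
  @Build_Functor CC IntSq (fun R : comPzRingType => existT _ R (pred1 R) : GObj square)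
    (fun (R S : comPzRingType) (f : CHom R S) => exist _ f (one_hom_proof f)).

Section Corner.
Variables (R : comPzRingType) (e : Pred R).
Let ev := proj1_sig e.
Let he : ev * ev = ev := elimT eqP (proj2_sig e).

Record corner := Corner { cval : R; cvalP : cval * ev == cval }.
HB.instance Definition _ := [isSub for cval].
HB.instance Definition _ := [Choice of corner by <:].

Lemma c0P : (0 : R) * ev == 0. Proof. by rewrite mul0r. Qed.
Lemma cDP (x y : corner) : (cval x + cval y) * ev == cval x + cval y.
Proof. by rewrite mulrDl (eqP (cvalP x)) (eqP (cvalP y)). Qed.
Lemma cNP (x : corner) : (- cval x) * ev == - cval x.
Proof. by rewrite mulNr (eqP (cvalP x)). Qed.
Lemma c1P : ev * ev == ev. Proof. by rewrite he. Qed.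
Lemma cMP (x y : corner) : (cval x * cval y) * ev == cval x * cval y.
Proof. by rewrite -mulrA (eqP (cvalP y)). Qed.

Definition czero := Corner c0P.
Definition cadd x y := Corner (cDP x y).
Definition copp x := Corner (cNP x).
Definition cone := Corner c1P.
Definition cmul x y := Corner (cMP x y).

Lemma caddA : associative cadd. Proof. by move=> x y z; apply: val_inj; rewrite /= addrA. Qed.
Lemma caddC : commutative cadd. Proof. by move=> x y; apply: val_inj; rewrite /= addrC. Qed.
Lemma cadd0 : left_id czero cadd. Proof. by move=> x; apply: val_inj; rewrite /= add0r. Qed.
Lemma caddN : left_inverse czero copp cadd.
Proof. by move=> x; apply: val_inj; rewrite /= addNr. Qed.
HB.instance Definition _ := GRing.isZmodule.Build corner caddA caddC cadd0 caddN.

Lemma cmulA : associative cmul. Proof. by move=> x y z; apply: val_inj; rewrite /= mulrA. Qed.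
Lemma cmulC : commutative cmul. Proof. by move=> x y; apply: val_inj; rewrite /= mulrC. Qed.
Lemma cmul1 : left_id cone cmul.
Proof. by move=> x; apply: val_inj; rewrite /= mulrC (eqP (cvalP x)). Qed.
Lemma cmulDl : left_distributive cmul cadd.
Proof. by move=> x y z; apply: val_inj; rewrite /= mulrDl. Qed.
HB.instance Definition _ := GRing.Zmodule_isComPzRing.Build corner cmulA cmulC cmul1 cmulDl.

Definition cornerRing : comPzRingType := corner.
End Corner.

Lemma pred_compl_proof (R : comPzRingType) (e : Pred R) :
  (1 - proj1_sig e) * (1 - proj1_sig e) == 1 - proj1_sig e.
Proof.
case: e => e /eqP he /=; apply/eqP.
transitivity (1 - 2%:R * e + e * e); first ring. rewrite he; ring.
Qed.
Definition pred_compl (R : comPzRingType) (e : Pred R) : Pred R :=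
  exist _ (1 - proj1_sig e) (pred_compl_proof e).

Definition compr_obj (x : Ob IntSq) : Ob CC := cornerRing (projT2 x).
Definition quot_obj (x : Ob IntSq) : Ob CC := cornerRing (pred_compl (projT2 x)).

(* A morphism (R, e) -> (S, d) of the Grothendieck construction is a subunital
   map f : S -> R with e f(d) = e f(1); hence f(z d) e = f(z) e, and f(z) e = 0
   whenever z d = 0.  Since 0 <= square(f)(d) and e <= square(f)(1) always hold,
   0 -| U -| 1 are given by the identity on underlying maps.  Comprehension sends
   f to z |-> f(z) e : dS -> eR, functorial by the first identity; quotient
   restricts f to (1-d)S -> (1-e)R, which lands there by the second.  The
   bijection for 1 -| comprehension restricts a map along dS ⊆ S (inverse:
   precompose with z |-> z d, legitimate as f(d) = f(1)); the one for
   quotient -| 0 corestricts a map with e f(1) = 0 to (1-e)R. *)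

From Pilot Require Import Defs.
From mathcomp Require Import all_boot all_order all_algebra.
From Stdlib Require Import ProofIrrelevance FunctionalExtensionality.
Set Implicit Arguments. Unset Strict Implicit. Unset Printing Implicit Defensive.
Import GRing.Theory.
Local Open Scope ring_scope.

Lemma chom_ext (S R : comPzRingType) (f g : CHom S R) : sval f =1 sval g -> f = g.
Proof.
case: f g => f hf [g hg] /= /functional_extensionality fg; subst g.
by rewrite (proof_irrelevance _ hf hg).
Qed.

Lemma ghom_ext (x y : GObj square) (f g : GHom x y) : sval f = sval g -> f = g.
Proof.
by case: f g => f hf [g hg] /= fg; subst g; rewrite (proof_irrelevance _ hf hg).
Qed.

Lemma pred_le_square_act (S R : comPzRingType) (f : CHom S R) (e : Pred S) (d : Pred R) :
  pred_le e (square_act f d) <-> sval e * sval f (sval d) = sval e * sval f 1.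
Proof.
rewrite /pred_le /= /sq_val mulrDr mulrBr mulr1 addrCA.
split=> [/eqP|->]; last by rewrite subrr addr0.
by rewrite -subr_eq0 addrAC subrr add0r subr_eq0 => /eqP.
Qed.

Section GrothendieckHoms.
Variables (x y : GObj square) (f : GHom x y).
Local Notation e := (sval (projT2 x)).
Local Notation d := (sval (projT2 y)).
Local Notation F := (sval (sval f)).
Let F_subunital : subunital F := proj2_sig (sval f).

Lemma ghom_pred_mul : e * F d = e * F 1.
Proof. exact/pred_le_square_act/(proj2_sig f). Qed.

Lemma ghom_mul_pred z : F (z * d) * e = F z * e.
Proof.
by rewrite (sub_fM F_subunital) -mulrA [F d * e]mulrC ghom_pred_mul mulrCA
  (sub_f1r F_subunital) mulrC.
Qed.

Lemma ghom_ann z : z * d = 0 -> F z * e = 0.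
Proof. by move=> zd0; rewrite -ghom_mul_pred zd0 (sub_f0 F_subunital) mul0r. Qed.
End GrothendieckHoms.

Section CornerMaps.
Variables (R : comPzRingType) (e : Pred R).

Lemma cval_subunital : subunital (@cval R e).
Proof. by []. Qed.

Lemma corner_proj_subproof (x : R) : x * sval e * sval e == x * sval e.
Proof. by rewrite -mulrA (eqP (proj2_sig e)). Qed.

Definition corner_proj (x : R) : cornerRing e := Corner (corner_proj_subproof x).

Lemma corner_proj_subunital : subunital corner_proj.
Proof.
split=> [|a b|a b]; apply: val_inj; rewrite /= ?mul0r ?mulrDl //.
by rewrite mulrACA (eqP (proj2_sig e)).
Qed.

Lemma cvalK : cancel (@cval R e) corner_proj.
Proof. by move=> c; apply: val_inj; rewrite /= (eqP (cvalP c)). Qed.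

Variables (S : comPzRingType) (f : S -> R) (fP : forall s, f s * sval e == f s).

Definition corner_lift (s : S) : cornerRing e := Corner (fP s).

Lemma corner_lift_subunital : subunital f -> subunital corner_lift.
Proof. by move=> hf; split=> [|a b|a b]; apply: val_inj; case: hf => /= f0 fD fM. Qed.
End CornerMaps.

Lemma compl_corner_mul_pred (R : comPzRingType) (e : Pred R) (c : corner (pred_compl e)) :
  cval c * sval e = 0.
Proof.
case: c => c /= /eqP <-; case: e => e /= /eqP he.
by rewrite -mulrA mulrBl mul1r he subrr mulr0.
Qed.

Lemma mul_compl_pred (R : comPzRingType) (e : Pred R) (x : R) :
  x * sval e = 0 -> x * (1 - sval e) == x.
Proof. by move=> xe0; rewrite mulrBr mulr1 xe0 subr0. Qed.

Lemma forget_zero_one_functors : [/\ IsFunctor U, IsFunctor ZeroF & IsFunctor OneF].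
Proof. by split; split=> // *; apply: ghom_ext. Qed.

Definition compr_hom (x y : GObj square) (f : GHom x y) : CHom (compr_obj x) (compr_obj y) :=
  exist _ (corner_proj (projT2 x) \o (sval (sval f) \o @cval _ (projT2 y)))
    (subunital_comp (corner_proj_subunital _)
       (subunital_comp (proj2_sig (sval f)) (cval_subunital _))).

Definition Compr : Functor IntSq CC := @Build_Functor IntSq CC compr_obj compr_hom.

Lemma Compr_functor : IsFunctor Compr.
Proof.
split=> [x|x y z g f]; apply: chom_ext => c; first exact: cvalK.
by apply: val_inj; rewrite /= ghom_mul_pred.
Qed.

Lemma quot_hom_subproof (x y : GObj square) (f : GHom x y) (c : corner (pred_compl (projT2 y))) :
  sval (sval f) (cval c) * sval (pred_compl (projT2 x)) == sval (sval f) (cval c).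
Proof. exact/mul_compl_pred/ghom_ann/compl_corner_mul_pred. Qed.

Definition quot_hom (x y : GObj square) (f : GHom x y) : CHom (quot_obj x) (quot_obj y) :=
  exist _ (corner_lift (quot_hom_subproof f))
    (corner_lift_subunital _ (subunital_comp (proj2_sig (sval f)) (cval_subunital _))).

Definition Quot : Functor IntSq CC := @Build_Functor IntSq CC quot_obj quot_hom.

Lemma Quot_functor : IsFunctor Quot.
Proof. by split=> *; apply: chom_ext => c; apply: val_inj. Qed.

Lemma ZeroF_U_adjunction : Adjunction ZeroF U.
Proof.
exists (fun R x (f : GHom (fobj ZeroF R) x) => sval f); split=> // R x.
have le0 (g : CHom R (projT1 x)) : pred_le (Defs.pred0 R) (square_act g (projT2 x)).
  by apply/pred_le_square_act; rewrite !mul0r.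
by exists (fun g => exist _ g (le0 g) : GHom (fobj ZeroF R) x) => // f; apply: ghom_ext.
Qed.

Lemma U_OneF_adjunction : Adjunction U OneF.
Proof.
have le1 x R (g : CHom (projT1 x) R) : pred_le (projT2 x) (square_act g (Defs.pred1 R)).
  exact/pred_le_square_act.
exists (fun x R g => exist _ g (le1 x R g) : GHom x (fobj OneF R)).
split=> [x R|*]; last exact: ghom_ext.
by exists (fun f : GHom x (fobj OneF R) => sval f) => // f; apply: ghom_ext.
Qed.

Section OneComprAdjunction.
Variables (R : comPzRingType) (y : GObj square).
Local Notation d := (projT2 y).

Definition restr_corner (f : GHom (fobj OneF R) y) : CHom R (compr_obj y) :=
  exist _ (sval (sval f) \o @cval _ d) (subunital_comp (proj2_sig (sval f)) (cval_subunital _)).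

Definition extend_corner_hom (g : CHom R (compr_obj y)) : CHom R (projT1 y) :=
  exist _ (sval g \o corner_proj d) (subunital_comp (proj2_sig g) (corner_proj_subunital _)).

Lemma extend_corner_le (g : CHom R (compr_obj y)) :
  pred_le (Defs.pred1 R) (square_act (extend_corner_hom g) d).
Proof.
apply/pred_le_square_act; rewrite /= !mul1r; congr (sval g _).
by apply: val_inj; rewrite /= mul1r (eqP (proj2_sig d)).
Qed.

Definition extend_corner (g : CHom R (compr_obj y)) : GHom (fobj OneF R) y :=
  exist _ (extend_corner_hom g) (extend_corner_le g).

Lemma restr_cornerK : cancel restr_corner extend_corner.
Proof.
move=> f; apply/ghom_ext/chom_ext => z /=.
by rewrite -[RHS]mulr1 -[LHS]mulr1 (ghom_mul_pred f).
Qed.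

Lemma extend_cornerK : cancel extend_corner restr_corner.
Proof. by move=> g; apply: chom_ext => c /=; rewrite cvalK. Qed.
End OneComprAdjunction.

Lemma OneF_Compr_adjunction : Adjunction OneF Compr.
Proof.
exists restr_corner; split=> [R y|R' R y y' h f g].
  exact: (Bijective (@restr_cornerK R y) (@extend_cornerK R y)).
apply: chom_ext => c /=; congr (sval h _).
by rewrite -[LHS]mulr1 -[RHS]mulr1 (ghom_mul_pred f).
Qed.

Section QuotZeroAdjunction.
Variables (x : GObj square) (S : comPzRingType).
Local Notation e := (projT2 x).

Definition corner_incl_hom (g : CHom (quot_obj x) S) : CHom (projT1 x) S :=
  exist _ (@cval _ (pred_compl e) \o sval g) (subunital_comp (cval_subunital _) (proj2_sig g)).

Lemma corner_incl_le (g : CHom (quot_obj x) S) :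
  pred_le e (square_act (corner_incl_hom g) (Defs.pred0 S)).
Proof.
apply/pred_le_square_act; rewrite /= (sub_f0 (proj2_sig g)) mulr0.
by rewrite mulrC compl_corner_mul_pred.
Qed.

Definition corner_incl (g : CHom (quot_obj x) S) : GHom x (fobj ZeroF S) :=
  exist _ (corner_incl_hom g) (corner_incl_le g).

Lemma corner_corestr_subproof (f : GHom x (fobj ZeroF S)) (s : S) :
  sval (sval f) s * sval (pred_compl e) == sval (sval f) s.
Proof. exact/mul_compl_pred/ghom_ann/mulr0. Qed.

Definition corner_corestr (f : GHom x (fobj ZeroF S)) : CHom (quot_obj x) S :=
  exist _ (corner_lift (corner_corestr_subproof f)) (corner_lift_subunital _ (proj2_sig (sval f))).

Lemma corner_inclK : cancel corner_incl corner_corestr.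
Proof. by move=> g; apply: chom_ext => s; apply: val_inj. Qed.

Lemma corner_corestrK : cancel corner_corestr corner_incl.
Proof. by move=> f; apply/ghom_ext/chom_ext. Qed.
End QuotZeroAdjunction.

Lemma Quot_ZeroF_adjunction : Adjunction Quot ZeroF.
Proof.
exists corner_incl; split=> [x S|*].
  exact: (Bijective (@corner_inclK x S) (@corner_corestrK x S)).
exact/ghom_ext/chom_ext.
Qed.

Theorem mainTheorem6 :
  [/\ IsFunctor U, IsFunctor ZeroF & IsFunctor OneF] /\
  Adjunction ZeroF U /\
  Adjunction U OneF /\
  (exists Cmp : Functor IntSq CC,
      (forall x, fobj Cmp x = compr_obj x) /\ IsFunctor Cmp /\ Adjunction OneF Cmp) /\
  (exists Q : Functor IntSq CC,
      (forall x, fobj Q x = quot_obj x) /\ IsFunctor Q /\ Adjunction Q ZeroF).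
Proof.
split; first exact: forget_zero_one_functors.
split; first exact: ZeroF_U_adjunction.
split; first exact: U_OneF_adjunction.
split.
- by exists Compr; split=> //; split; [exact: Compr_functor | exact: OneF_Compr_adjunction].
- by exists Quot; split=> //; split; [exact: Quot_functor | exact: Quot_ZeroF_adjunction].
Qed.
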